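(* Let $\mathcal X$ be a real normed space and $\mathcal Y$ a normed space. Let $c:\mathcal X\to\mathcal Y$ be an orthogonally constant mapping. If $x,y\in\mathcal X$ satisfy $\|x\|=\|y\|$, then $c(x)=c(y)$.
   Context: For $x,y$ in a real normed space $\mathcal X$, isosceles orthogonality is defined by $x\perp y$ if and only if $\|x+y\|=\|x-y\|$. A mapping $c:\mathcal X\to\mathcal Y$ is called orthogonally constant if $c(x+y)=c(x-y)$ for all $x,y\in\mathcal X$ with $x\perp y$. *)

From HB Require Import structures.
From mathcomp Require Import all_boot all_order all_algebra.
From mathcomp Require Import all_classical all_reals all_analysis.
Set Implicit Arguments. Unset Strict Implicit. Unset Printing Implicit Defensive.
Import Order.TTheory GRing.Theory Num.Theory.
Local Open Scope ring_scope.

Definition iso_orth (R : realType) (X : normedModType R) (x y : X) : Prop :=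
  `|x + y| = `|x - y|.

Definition orth_constant (R : realType) (X : normedModType R) (Y : Type)
  (c : X -> Y) : Prop :=
  forall x y : X, iso_orth x y -> c (x + y) = c (x - y).

From HB Require Import structures.
From mathcomp Require Import all_boot all_order all_algebra.
From mathcomp Require Import all_classical all_reals all_analysis.
Import Order.TTheory GRing.Theory Num.Theory.
Local Open Scope ring_scope.

(* Write x = u + v and y = u - v with u = (x + y)/2 and v = (x - y)/2; then
   u _|_ v says exactly that ||x|| = ||y||, so c x = c (u + v) = c (u - v) = c y. *)

Section HalfSumHalfDiff.
Variables (R : numFieldType) (V : lmodType R).

Lemma scale_half_mulr2n (x : V) : 2^-1 *: (x *+ 2) = x.
Proof. by rewrite -scaler_nat scalerA mulVf ?pnatr_eq0 ?scale1r. Qed.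

Lemma half_sum_add_half_diff (x y : V) :
  2^-1 *: (x + y) + 2^-1 *: (x - y) = x.
Proof. by rewrite -scalerDr addrACA subrr addr0 -mulr2n scale_half_mulr2n. Qed.

Lemma half_sum_sub_half_diff (x y : V) :
  2^-1 *: (x + y) - 2^-1 *: (x - y) = y.
Proof.
by rewrite -scalerBr opprB addrC addrA subrK -mulr2n scale_half_mulr2n.
Qed.

End HalfSumHalfDiff.

Lemma iso_orth_half_sum_half_diff {R : realType} {X : normedModType R} (x y : X) :
  iso_orth (2^-1 *: (x + y)) (2^-1 *: (x - y)) <-> `|x| = `|y|.
Proof. by rewrite /iso_orth half_sum_add_half_diff half_sum_sub_half_diff. Qed.

Theorem lemma2p2 (R : realType) (X : normedModType R) (Y : normedModType R)
  (c : X -> Y) (hc : orth_constant c) (x y : X) (hxy : `|x| = `|y|) :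
  c x = c y.
Proof.
have huv := hc _ _ ((iso_orth_half_sum_half_diff x y).2 hxy).
by rewrite half_sum_add_half_diff half_sum_sub_half_diff in huv.
Qed.
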